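(* Let $F$ be a formal group law over a commutative ring $R$ with formal inverse $\chi$, write $x-_Fy:=F(x,\chi(y))$, and let $S\subset R[[x_1,\dots,x_n]]$ be the ideal generated by the homogeneous symmetric polynomials of positive degree. Then (a) $\Delta_n:=\prod_{1\le i<j\le n}(x_i-x_j)\equiv n!\,x_1^{n-1}x_2^{n-2}\cdots x_{n-1} \pmod S$; (b) $\Delta_n\equiv \Delta_n^F:=\prod_{1\le i<j\le n}(x_i-_Fx_j)\pmod S$. *)

From HB Require Import structures.
From mathcomp Require Import all_boot all_order all_algebra all_fingroup.
Set Implicit Arguments. Unset Strict Implicit. Unset Printing Implicit Defensive.
Import GRing.Theory.
Local Open Scope ring_scope.

Definition mono (n : nat) := {ffun 'I_n -> nat}.
Definition mdeg n (m : mono n) : nat := (\sum_(i < n) m i)%N.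

Definition mps (R : Type) (n : nat) := mono n -> R.

Section MPS.
Variable R : comPzRingType.

Definition mzero n : mps R n := fun _ => 0.
Definition mmono n (e : mono n) : mps R n :=
  fun m => if m == e then 1 else 0.
Definition mone n : mps R n := mmono [ffun=> 0%N].
Definition mX n (i : 'I_n) : mps R n :=
  mmono [ffun j => if j == i then 1%N else 0%N].
Definition madd n (f g : mps R n) : mps R n := fun m => f m + g m.
Definition mopp n (f : mps R n) : mps R n := fun m => - f m.
Definition msub n (f g : mps R n) : mps R n := madd f (mopp g).
Definition mscale n (c : R) (f : mps R n) : mps R n := fun m => c * f m.
Definition mconst n (f : mps R n) : R := f [ffun=> 0%N].

Definition ffun_nat n k (a : {ffun 'I_n -> 'I_k}) : mono n :=
  [ffun i => nat_of_ord (a i)].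

Definition mmul n (f g : mps R n) : mps R n := fun m =>
  \sum_(a : {ffun 'I_n -> 'I_(mdeg m).+1} | [forall i, (a i <= m i)%N])
     f (ffun_nat a) * g [ffun i => (m i - a i)%N].

Definition mpow n (f : mps R n) (k : nat) : mps R n := iter k (mmul f) (@mone n).

(* substitution F(u_0,...,u_{k-1}) of series u_i (meant to have zero constant
   term) into F in k variables; for zero-constant-term u_i, only monomials of F
   with all exponents <= mdeg m contribute to the coefficient of x^m. *)
Definition msubst k n (F : mps R k) (u : 'I_k -> mps R n) : mps R n := fun m =>
  \sum_(a : {ffun 'I_k -> 'I_(mdeg m).+1})
     F (ffun_nat a) * (\big[@mmul n/@mone n]_(i < k) mpow (u i) (a i)) m.

Definition pair2 n (u v : mps R n) : 'I_2 -> mps R n :=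
  fun i => if val i == 0%N then u else v.

Definition is_fgl (F : mps R 2) : Prop :=
  [/\ msubst F (pair2 (mX (ord0 : 'I_1)) (@mzero 1)) = mX (ord0 : 'I_1),
      msubst F (pair2 (@mzero 1) (mX (ord0 : 'I_1))) = mX (ord0 : 'I_1),
      msubst F (pair2 (mX (inord 1 : 'I_2)) (mX (inord 0 : 'I_2))) = F &
      let x := mX (inord 0 : 'I_3) in
      let y := mX (inord 1 : 'I_3) in
      let z := mX (inord 2 : 'I_3) in
      msubst F (pair2 x (msubst F (pair2 y z)))
      = msubst F (pair2 (msubst F (pair2 x y)) z)].

Definition formal_inverse (F : mps R 2) (chi : mps R 1) : Prop :=
  mconst chi = 0 /\ msubst F (pair2 (mX (ord0 : 'I_1)) chi) = @mzero 1.

Definition fsub n (F : mps R 2) (chi : mps R 1) (u v : mps R n) : mps R n :=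
  msubst F (pair2 u (msubst chi (fun _ : 'I_1 => v))).

Definition homog_sym_pos n (s : mps R n) : Prop :=
  (exists2 d : nat, (0 < d)%N & forall m, s m != 0 -> mdeg m = d) /\
  (forall (sigma : 'S_n) (m : mono n), s [ffun i => m (sigma i)] = s m).

Definition in_S n (f : mps R n) : Prop :=
  exists (k : nat) (g s : 'I_k -> mps R n),
    (forall j, homog_sym_pos (s j)) /\
    f = \big[@madd n/@mzero n]_(j < k) mmul (g j) (s j).

Definition congr_S n (f g : mps R n) : Prop := in_S (msub f g).

Definition Delta n : mps R n :=
  \big[@mmul n/@mone n]_(i < n) \big[@mmul n/@mone n]_(j < n | (i < j)%N)
     msub (mX i) (mX j).

Definition DeltaF n (F : mps R 2) (chi : mps R 1) : mps R n :=
  \big[@mmul n/@mone n]_(i < n) \big[@mmul n/@mone n]_(j < n | (i < j)%N)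
     fsub F chi (mX i) (mX j).

(* n! x_1^(n-1) x_2^(n-2) ... x_(n-1)  (0-indexed: exponent of x_i is n-1-i) *)
Definition staircase n : mps R n :=
  mscale (n`!)%:R (mmono [ffun i : 'I_n => (n.-1 - i)%N]).

End MPS.

(* Since S contains every h_d(x_0..x_(n-1)) with d > 0, modulo S we have
   h_k(x_0..x_(i-1)) = (-1)^k e_k(x_i..x_(n-1)), which vanishes for k > n - i.  By
   induction on i, every monomial in x_0..x_(i-1) of degree above that of the staircase
   x_0^(n-1) x_1^(n-2) ... x_(i-1)^(n-i) then lies in S.
   (a) Multiply out Delta row by row: by Vieta, prod_(j>i) (x_i - x_j) is
   sum_k (-1)^k e_k(x_(i+1)..x_(n-1)) x_i^(n-1-i-k); modulo S, (-1)^k e_k becomes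
   h_k(x_0..x_i), which against the staircase on x_0..x_(i-1) only contributes x_i^k, so
   the row contributes (n - i) x_i^(n-1-i).
   (b) x -_F y = x - y + (terms of degree >= 2), so Delta^F - Delta only has terms of
   degree > n(n-1)/2, the degree of the full staircase, and such series lie in S. *)

From HB Require Import structures.
From mathcomp Require Import all_boot all_order all_algebra all_fingroup.
From mathcomp Require Import boolp zify ring.
Set Implicit Arguments. Unset Strict Implicit. Unset Printing Implicit Defensive.
Import GRing.Theory.
Local Open Scope ring_scope.

Section Monomials.
Variable n : nat.
Implicit Types (u v w m : mono n) (i : 'I_n).

Definition zerom : mono n := [ffun=> 0%N].
Definition addm u v : mono n := [ffun i => (u i + v i)%N].
Definition subm u v : mono n := [ffun i => (u i - v i)%N].
Definition unitm i : mono n := [ffun j => if j == i then 1 else 0]%N.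
Definition powm i a : mono n := [ffun j => if j == i then a else 0]%N.
Definition lem u v := [forall i, u i <= v i]%N.
Definition boundm M u := [forall i, u i <= M]%N.

Lemma addmC u v : addm u v = addm v u.
Proof. by apply/ffunP => i; rewrite !ffunE addnC. Qed.

Lemma addmA u v w : addm u (addm v w) = addm (addm u v) w.
Proof. by apply/ffunP => i; rewrite !ffunE addnA. Qed.

Lemma lem_addm u v : lem u (addm u v).
Proof. by apply/forallP => i; rewrite ffunE leq_addr. Qed.

Lemma subm_addm u v : subm (addm u v) u = v.
Proof. by apply/ffunP => i; rewrite !ffunE addKn. Qed.

Lemma addm_subm u m : lem u m -> addm u (subm m u) = m.
Proof. by move/forallP=> h; apply/ffunP => i; rewrite !ffunE subnKC. Qed.

Lemma lem_unitm i m : lem (unitm i) m = (0 < m i)%N.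
Proof.
apply/forallP/idP => [/(_ i)|h j]; first by rewrite ffunE eqxx.
by rewrite ffunE; case: eqP => // ->.
Qed.

Lemma unitm_inj : injective unitm.
Proof. by move=> i j /ffunP /(_ i); rewrite !ffunE eqxx; case: (i =P j). Qed.

Lemma mdeg_addm u v : mdeg (addm u v) = (mdeg u + mdeg v)%N.
Proof. by rewrite /mdeg -big_split; apply: eq_bigr => i _; rewrite ffunE. Qed.

Lemma mdeg_subm u m : lem u m -> mdeg (subm m u) = (mdeg m - mdeg u)%N.
Proof. by move=> h; rewrite -{2}(addm_subm h) mdeg_addm addKn. Qed.

Lemma mdeg_powm i a : mdeg (powm i a) = a.
Proof.
rewrite /mdeg (bigD1 i) //= big1 => [|j /negbTE h]; rewrite ffunE ?eqxx ?h ?addn0 //.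
Qed.

Lemma mdeg_unitm i : mdeg (unitm i) = 1%N.
Proof. by rewrite -(mdeg_powm i 1); congr mdeg; apply/ffunP => j; rewrite !ffunE. Qed.

Lemma mdeg_eq0 m : (mdeg m == 0%N) = (m == zerom).
Proof.
apply/idP/eqP => [|->]; last by rewrite /mdeg big1 // => i _; rewrite ffunE.
rewrite /mdeg sum_nat_eq0 => /forallP h; apply/ffunP => i; rewrite ffunE.
by apply/eqP; move: (h i); rewrite implyTb.
Qed.

Lemma mdeg_zerom : mdeg zerom = 0%N.
Proof. by apply/eqP; rewrite mdeg_eq0. Qed.

Lemma unitm_eq0 i : (unitm i == zerom) = false.
Proof. by apply/negbTE; rewrite -mdeg_eq0 mdeg_unitm. Qed.

Lemma leq_mdeg m i : (m i <= mdeg m)%N.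
Proof. by rewrite /mdeg (bigD1 i) //= leq_addr. Qed.

Lemma mdeg_eq1 m : mdeg m = 1%N -> exists i, m = unitm i.
Proof.
move=> hm; have [i hi|m0] := pickP (fun i => 0 < m i)%N; last first.
  by move: hm; rewrite /mdeg big1 // => i _; apply/eqP; rewrite eqn0Ngt m0.
exists i; move: hm; rewrite /mdeg (bigD1 i) //= => hm.
have mi : m i = 1%N by move: hi hm => /=; lia.
move: hm; rewrite mi => -[] /eqP; rewrite sum_nat_eq0 => /forallP rest.
apply/ffunP => j; rewrite ffunE; case: (j =P i) => [->|/eqP ne] //.
by apply/eqP; move/implyP: (rest j); apply.
Qed.

Lemma mdeg_perm (s : 'S_n) m : mdeg [ffun i => m (s i)] = mdeg m.
Proof.
rewrite /mdeg (reindex_inj (@perm_inj _ s^-1)) /=.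
by apply: eq_bigr => i _; rewrite ffunE permKV.
Qed.

Lemma boundm_lem M u v : lem u v -> boundm M v -> boundm M u.
Proof.
by move=> /forallP h1 /forallP h2; apply/forallP => i; apply: leq_trans (h1 i) (h2 i).
Qed.

Lemma boundm_mdeg m : boundm (mdeg m) m.
Proof. by apply/forallP => i; apply: leq_mdeg. Qed.

(* The coefficient sums defining [mmul] and [msubst] range over [box M], the
   exponent vectors bounded by [M]; [box_mono] turns them into monomials. *)
Definition box M := {ffun 'I_n -> 'I_M.+1}.
Definition box_mono M (a : box M) : mono n := ffun_nat a.
Definition mono_box M u : box M := [ffun i => inord (u i)].

Lemma box_monoE M (a : box M) i : box_mono a i = a i.
Proof. by rewrite ffunE. Qed.

Lemma boundm_box M (a : box M) : boundm M (box_mono a).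
Proof. by apply/forallP => i; rewrite box_monoE -ltnS ltn_ord. Qed.

Lemma mono_boxK M u : boundm M u -> box_mono (mono_box M u) = u.
Proof. by move/forallP=> h; apply/ffunP => i; rewrite box_monoE ffunE inordK ?ltnS. Qed.

Lemma box_mono_inj M : injective (@box_mono M).
Proof.
move=> a b /ffunP h; apply/ffunP => i; apply/val_inj.
by move: (h i); rewrite !box_monoE.
Qed.

Lemma sum_box_mono_eq (R : nmodType) M u (X : box M -> R) :
  \sum_(a : box M | box_mono a == u) X a = if boundm M u then X (mono_box M u) else 0.
Proof.
case: ifP => hb.
  rewrite (big_pred1 (mono_box M u)) // => a /=.
  apply/eqP/eqP => [ha|->]; last by rewrite mono_boxK.
  by apply: box_mono_inj; rewrite mono_boxK.
rewrite big_pred0 // => a; apply/negbTE/eqP => ha.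
by move: hb; rewrite -ha boundm_box.
Qed.

Lemma sum_box_collapse (R : nmodType) M u (Y : mono n -> R) :
    (~~ boundm M u -> Y u = 0) ->
  \sum_(a : box M) (if box_mono a == u then Y (box_mono a) else 0) = Y u.
Proof.
move=> hY; rewrite -big_mkcond /= (eq_bigr (fun _ => Y u)); last by move=> a /eqP ->.
by rewrite sum_box_mono_eq; case: ifP => // /negbT /hY ->.
Qed.

Lemma sum_box_widen (R : nmodType) M1 M2 (phi : mono n -> R) m :
    (M1 <= M2)%N -> boundm M1 m ->
  \sum_(a : box M1 | lem (box_mono a) m) phi (box_mono a)
  = \sum_(a : box M2 | lem (box_mono a) m) phi (box_mono a).
Proof.
move=> le hm; have le' : (M1.+1 <= M2.+1)%N by [].
pose widen (a : box M1) : box M2 := [ffun i => widen_ord le' (a i)].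
have widenE a : box_mono (widen a) = box_mono a.
  by apply/ffunP => i; rewrite !box_monoE ffunE.
rewrite (reindex_onto widen (fun b => mono_box M1 (box_mono b))); last first.
  move=> b hb; apply: box_mono_inj; rewrite widenE mono_boxK //.
  exact: boundm_lem hb hm.
apply: eq_big => [a|a _]; last by rewrite widenE.
rewrite widenE; have -> : mono_box M1 (box_mono a) == a.
  by apply/eqP/box_mono_inj; rewrite mono_boxK // boundm_box.
by rewrite andbT.
Qed.

Lemma sum_box_change (R : nmodType) M1 M2 (phi : mono n -> R) m :
    boundm M1 m -> boundm M2 m ->
  \sum_(a : box M1 | lem (box_mono a) m) phi (box_mono a)
  = \sum_(a : box M2 | lem (box_mono a) m) phi (box_mono a).
Proof.
move=> h1 h2.
by rewrite (sum_box_widen phi (leq_maxl M1 M2) h1) (sum_box_widen phi (leq_maxr M1 M2) h2).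
Qed.

End Monomials.

Section SeriesRing.
Variables (R : comPzRingType) (n : nat).
Implicit Types (f g h : mps R n) (u m : mono n).
Local Notation box := (@box n).

Lemma mmul_box M f g m : boundm M m ->
  mmul f g m = \sum_(a : box M | lem (box_mono a) m) f (box_mono a) * g (subm m (box_mono a)).
Proof.
move=> hm; rewrite -(sum_box_change (fun u => f u * g (subm m u)) (boundm_mdeg m) hm).
apply: eq_big => [a|a _]; first by apply: eq_forallb => i; rewrite box_monoE.
by congr (_ * g _); apply/ffunP => i; rewrite !ffunE.
Qed.

Definition mconv M f g m := \sum_(a : box M) \sum_(b : box M)
  if addm (box_mono a) (box_mono b) == m then f (box_mono a) * g (box_mono b) else 0.

Lemma mmul_conv M f g m : boundm M m -> mmul f g m = mconv M f g m.
Proof.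
move=> hm; rewrite (mmul_box _ _ hm) /mconv [RHS](bigID (fun a => lem (box_mono a) m)) /=.
rewrite [X in _ = _ + X]big1 ?addr0 => [|a ha]; last first.
  rewrite big1 // => b _; case: eqP => // e; case/negP: ha.
  by rewrite -e lem_addm.
apply: eq_bigr => a ha; rewrite -big_mkcond /=.
rewrite (eq_bigl (fun b => box_mono b == subm m (box_mono a))); last first.
  move=> b; apply/eqP/eqP => [<-|->]; first by rewrite subm_addm.
  exact: addm_subm.
rewrite sum_box_mono_eq; case: ifP => hb; first by rewrite mono_boxK.
suff: boundm M (subm m (box_mono a)) by rewrite hb.
by apply: boundm_lem hm; apply/forallP => i; rewrite ffunE leq_subr.
Qed.

Lemma mmulC f g : mmul f g = mmul g f.
Proof.
apply: funext => m; rewrite !(mmul_conv _ _ (boundm_mdeg m)) /mconv exchange_big.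
by apply: eq_bigr => b _; apply: eq_bigr => a _; rewrite addmC mulrC.
Qed.

Section Associativity.
Variables (f g h : mps R n) (m : mono n).
Local Notation M := (mdeg m).

Definition mconv3 := \sum_(a : box M) \sum_(b : box M) \sum_(c : box M)
  if addm (addm (box_mono a) (box_mono b)) (box_mono c) == m
  then f (box_mono a) * g (box_mono b) * h (box_mono c) else 0.

Lemma mmul_mmulr : mmul f (mmul g h) m = mconv3.
Proof.
rewrite (mmul_conv _ _ (boundm_mdeg m)) /mconv; apply: eq_bigr => a _.
under eq_bigr => q _ do rewrite (mmul_conv _ _ (boundm_box q)) /mconv.
transitivity (\sum_(q : box M) \sum_(b : box M) \sum_(c : box M)
   if box_mono q == addm (box_mono b) (box_mono c) then
     (if addm (box_mono a) (box_mono q) == m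
      then f (box_mono a) * g (box_mono b) * h (box_mono c) else 0) else 0).
  apply: eq_bigr => q _; case: ifP => _; last first.
    by rewrite big1 // => b _; rewrite big1 // => c _; case: ifP.
  rewrite mulr_sumr; apply: eq_bigr => b _; rewrite mulr_sumr; apply: eq_bigr => c _.
  by rewrite eq_sym; case: ifP => _; rewrite ?mulr0 ?mulrA.
rewrite exchange_big; apply: eq_bigr => b _; rewrite exchange_big; apply: eq_bigr => c _.
rewrite (@sum_box_collapse _ _ _ _ (fun u => if addm (box_mono a) u == m
   then f (box_mono a) * g (box_mono b) * h (box_mono c) else 0)); first by rewrite addmA.
move=> nb; case: eqP => // he; case/negP: nb.
by apply: boundm_lem (boundm_mdeg m); rewrite -[X in lem _ X]he [X in lem _ X]addmC lem_addm.
Qed.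

Lemma mmul_mmull : mmul (mmul f g) h m = mconv3.
Proof.
rewrite (mmul_conv _ _ (boundm_mdeg m)) /mconv.
transitivity (\sum_(p : box M) \sum_(c : box M) \sum_(a : box M) \sum_(b : box M)
     if box_mono p == addm (box_mono a) (box_mono b) then
       (if addm (box_mono p) (box_mono c) == m
        then f (box_mono a) * g (box_mono b) * h (box_mono c) else 0) else 0).
  apply: eq_bigr => p _; apply: eq_bigr => c _.
  rewrite (mmul_conv _ _ (boundm_box p)) /mconv.
  case: ifP => _; last by rewrite big1 // => a _; rewrite big1 // => b _; case: ifP.
  rewrite mulr_suml; apply: eq_bigr => a _; rewrite mulr_suml; apply: eq_bigr => b _.
  by rewrite eq_sym; case: ifP => _; rewrite ?mul0r.
rewrite exchange_big /=.
under eq_bigr => c _ do rewrite exchange_big.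
under eq_bigr => c _ do under eq_bigr => a _ do rewrite exchange_big.
rewrite exchange_big; apply: eq_bigr => a _; rewrite exchange_big.
apply: eq_bigr => b _; apply: eq_bigr => c _.
rewrite (@sum_box_collapse _ _ _ _ (fun u => if addm u (box_mono c) == m
   then f (box_mono a) * g (box_mono b) * h (box_mono c) else 0)) //.
move=> nb; case: eqP => // he; case/negP: nb.
by apply: boundm_lem (boundm_mdeg m); rewrite -[X in lem _ X]he lem_addm.
Qed.

End Associativity.

Lemma mmulA f g h : mmul f (mmul g h) = mmul (mmul f g) h.
Proof. by apply: funext => m; rewrite mmul_mmulr mmul_mmull. Qed.

Lemma mmul_mmono u g m : mmul (mmono R u) g m = if lem u m then g (subm m u) else 0.
Proof.
rewrite (mmul_box _ _ (boundm_mdeg m)) (bigID (fun a => box_mono a == u)) /=.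
rewrite [X in _ + X]big1 ?addr0 => [|a /andP[_ /negbTE h]]; last by rewrite /mmono h mul0r.
case: (boolP (lem u m)) => hu; last first.
  by rewrite big_pred0 // => a; case: (box_mono a =P u) => [->|]; rewrite ?(negbTE hu) ?andbF.
rewrite (eq_bigl (fun a => box_mono a == u)); last first.
  by move=> a /=; case: (box_mono a =P u) => [->|]; rewrite ?hu ?andbF ?andbT.
rewrite (eq_bigr (fun _ => g (subm m u))); last by move=> a /eqP ->; rewrite /mmono eqxx mul1r.
by rewrite sum_box_mono_eq (boundm_lem hu (boundm_mdeg m)).
Qed.

Lemma mmul1 g : mmul (@mone R n) g = g.
Proof.
apply: funext => m; rewrite /mone mmul_mmono.
have -> : lem [ffun=> 0%N] m by apply/forallP => i; rewrite ffunE.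
by congr g; apply/ffunP => i; rewrite !ffunE subn0.
Qed.

Lemma mmulDl f g h : mmul (madd f g) h = madd (mmul f h) (mmul g h).
Proof.
by apply: funext => m; rewrite /mmul /madd -big_split; apply: eq_bigr => a _; rewrite mulrDl.
Qed.

Lemma maddA f g h : madd f (madd g h) = madd (madd f g) h.
Proof. by apply: funext => m; rewrite /madd addrA. Qed.

Lemma maddC f g : madd f g = madd g f.
Proof. by apply: funext => m; rewrite /madd addrC. Qed.

Lemma madd0 f : madd (@mzero R n) f = f.
Proof. by apply: funext => m; rewrite /madd /mzero add0r. Qed.

Lemma maddN f : madd (mopp f) f = @mzero R n.
Proof. by apply: funext => m; rewrite /madd /mopp /mzero addNr. Qed.

End SeriesRing.

(* Declared on [mps] itself, so that the [mmul]/[mone] products of [Delta] and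
   [DeltaF] are ring products. *)
HB.instance Definition _ (R : comPzRingType) n := Choice.on (mps R n).
HB.instance Definition _ (R : comPzRingType) n :=
  GRing.isZmodule.Build (mps R n) (@maddA R n) (@maddC R n) (@madd0 R n) (@maddN R n).
HB.instance Definition _ (R : comPzRingType) n :=
  GRing.Zmodule_isComPzRing.Build (mps R n)
    (@mmulA R n) (@mmulC R n) (@mmul1 R n) (@mmulDl R n).

Section IdealS.
Variables (R : comPzRingType) (n : nat).
Local Notation P := (mps R n).
Local Notation in_S := (@in_S R n).
Local Notation congr_S := (@congr_S R n).
Implicit Types f g h s : P.

Lemma in_SE f : in_S f <-> exists k (g s : 'I_k -> P),
  (forall j, homog_sym_pos (s j)) /\ f = \sum_(j < k) g j * s j.
Proof. by []. Qed.

Lemma in_S0 : in_S 0.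
Proof.
by apply/in_SE; exists 0%N, (fun _ => 0), (fun _ => 0); split => [[]//|]; rewrite big_ord0.
Qed.

Lemma in_S_homog_sym s : homog_sym_pos s -> in_S s.
Proof.
move=> hs; apply/in_SE; exists 1%N, (fun _ => 1), (fun _ => s).
by split => //; rewrite big_ord1 mul1r.
Qed.

Lemma in_SD f g : in_S f -> in_S g -> in_S (f + g).
Proof.
move=> /in_SE [k1 [g1 [s1 [h1 ->]]]] /in_SE [k2 [g2 [s2 [h2 ->]]]].
pose glue (T : Type) (t1 : 'I_k1 -> T) (t2 : 'I_k2 -> T) (j : 'I_(k1 + k2)) :=
  match split j with inl a => t1 a | inr b => t2 b end.
apply/in_SE; exists (k1 + k2)%N, (glue _ g1 g2), (glue _ s1 s2); split.
  by move=> j; rewrite /glue; case: (split j).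
by rewrite big_split_ord /glue; congr (_ + _); apply: eq_bigr => i _;
  [rewrite (unsplitK (inl _ i)) | rewrite (unsplitK (inr _ i))].
Qed.

Lemma in_SMl h f : in_S f -> in_S (h * f).
Proof.
move=> /in_SE [k [g [s [hs ->]]]]; apply/in_SE; exists k, (fun j => h * g j), s.
by split => //; rewrite mulr_sumr; apply: eq_bigr => j _; rewrite mulrA.
Qed.

Lemma in_SMr h f : in_S f -> in_S (f * h).
Proof. by rewrite mulrC; apply: in_SMl. Qed.

Lemma in_SN f : in_S f -> in_S (- f).
Proof. by rewrite -mulN1r; apply: in_SMl. Qed.

Lemma in_SB f g : in_S f -> in_S g -> in_S (f - g).
Proof. by move=> hf /in_SN; apply: in_SD. Qed.

Lemma in_S_sum (I : Type) (r : seq I) (Q : pred I) (F : I -> P) :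
  (forall i, Q i -> in_S (F i)) -> in_S (\sum_(i <- r | Q i) F i).
Proof.
by move=> h; elim/big_rec: _ => [|i x qi hx]; [apply: in_S0 | apply: in_SD => //; apply: h].
Qed.

Lemma congr_SE f g : congr_S f g = in_S (f - g).
Proof. by []. Qed.

Lemma congr_S_refl f : congr_S f f.
Proof. by rewrite congr_SE subrr; apply: in_S0. Qed.

Lemma congr_S_sym f g : congr_S f g -> congr_S g f.
Proof. by rewrite !congr_SE => /in_SN; rewrite opprB. Qed.

Lemma congr_S_trans f g h : congr_S f g -> congr_S g h -> congr_S f h.
Proof. by rewrite !congr_SE => /in_SD h1 /h1; rewrite addrA subrK. Qed.

Lemma congr_SM f f' g g' : congr_S f f' -> congr_S g g' -> congr_S (f * g) (f' * g').
Proof.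
rewrite !congr_SE => h1 h2.
have -> : f * g - f' * g' = (f - f') * g + f' * (g - g') by ring.
by apply: in_SD; [apply: in_SMr | apply: in_SMl].
Qed.

Lemma congr_S_sum (I : Type) (r : seq I) (Q : pred I) (F G : I -> P) :
    (forall i, Q i -> congr_S (F i) (G i)) ->
  congr_S (\sum_(i <- r | Q i) F i) (\sum_(i <- r | Q i) G i).
Proof. by move=> h; rewrite congr_SE -sumrB; apply: in_S_sum. Qed.

End IdealS.

Section MonomialSeries.
Variables (R : comPzRingType) (n : nat).
Local Notation P := (mps R n).
Local Notation mon := (@mmono R n).
Local Notation x := (@mX R n).
Implicit Types (f g : P) (u v m : mono n).

Lemma coefD f g m : (f + g) m = f m + g m. Proof. by []. Qed.
Lemma coefB f g m : (f - g) m = f m - g m. Proof. by []. Qed.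
Lemma coef0 m : (0 : P) m = 0. Proof. by []. Qed.
Lemma coefM f g m : (f * g) m = mmul f g m. Proof. by []. Qed.

Lemma coef_sum (I : Type) (r : seq I) (Q : pred I) (F : I -> P) m :
  (\sum_(i <- r | Q i) F i) m = \sum_(i <- r | Q i) F i m.
Proof. by elim/big_rec2: _ => // i y1 y2 _ <-. Qed.

Lemma coef_natM k f m : (k%:R * f) m = k%:R * f m.
Proof.
rewrite mulr_natl; elim: k => [|k IH]; first by rewrite mulr0n mul0r.
by rewrite mulrS coefD IH mulrS mulrDl mul1r.
Qed.

Lemma coef_mon u m : mon u m = if m == u then 1 else 0. Proof. by []. Qed.
Lemma mXE i : x i = mon (unitm i). Proof. by []. Qed.
Lemma coef_mX i m : x i m = (m == unitm i)%:R. Proof. by rewrite /mX /mmono; case: eqP. Qed.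
Lemma mon0 : mon (zerom n) = 1. Proof. by []. Qed.

Lemma coef1 m : (1 : P) m = (mdeg m == 0%N)%:R.
Proof. by rewrite -mon0 coef_mon mdeg_eq0; case: eqP. Qed.

Lemma coef_monM u g m : (mon u * g) m = if lem u m then g (subm m u) else 0.
Proof. exact: mmul_mmono. Qed.

Lemma monM u v : mon u * mon v = mon (addm u v).
Proof.
apply: funext => m; rewrite coef_monM !coef_mon.
case: ifP => hu; last by case: eqP => // he; move: hu; rewrite he lem_addm.
by congr (if _ then _ else _); apply/eqP/eqP => [<-|->]; rewrite ?addm_subm ?subm_addm.
Qed.

Lemma mX_exp i a : x i ^+ a = mon (powm i a).
Proof.
elim: a => [|a IH].
  by rewrite expr0 -mon0; congr mon; apply/ffunP => j; rewrite !ffunE; case: ifP.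
by rewrite exprS IH mXE monM; congr mon; apply/ffunP => j; rewrite !ffunE; case: ifP.
Qed.

Definition order_ge k f := forall m, (mdeg m < k)%N -> f m = 0.

Lemma order_ge0 k : order_ge k 0. Proof. by []. Qed.

Lemma order_ge_le k k' f : (k' <= k)%N -> order_ge k f -> order_ge k' f.
Proof. by move=> le h m hm; apply: h; apply: leq_trans hm le. Qed.

Lemma order_geD k f g : order_ge k f -> order_ge k g -> order_ge k (f + g).
Proof. by move=> hf hg m hm; rewrite coefD hf ?hg ?addr0. Qed.

Lemma order_geB k f g : order_ge k f -> order_ge k g -> order_ge k (f - g).
Proof. by move=> hf hg m hm; rewrite coefB hf ?hg ?subr0. Qed.

Lemma order_ge_mon u : order_ge (mdeg u) (mon u).
Proof. by move=> m hm; rewrite coef_mon; case: eqP => // e; move: hm; rewrite e ltnn. Qed.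

Lemma order_ge_mX i : order_ge 1 (x i).
Proof. by have := @order_ge_mon (unitm i); rewrite mdeg_unitm. Qed.

Lemma order_geM a b f g : order_ge a f -> order_ge b g -> order_ge (a + b) (f * g).
Proof.
move=> hf hg m hm; rewrite coefM (mmul_box _ _ (boundm_mdeg m)) big1 // => c.
move: (box_mono c) => u hc.
have [ltua|leau] := ltnP (mdeg u) a; first by rewrite hf ?mul0r.
rewrite hg ?mulr0 // mdeg_subm //.
have : (mdeg u <= mdeg m)%N by rewrite -(addm_subm hc) mdeg_addm leq_addr.
lia.
Qed.

Lemma order_ge_prod (I : Type) (r : seq I) (Q : pred I) (F : I -> P) (c : I -> nat) :
    (forall i, Q i -> order_ge (c i) (F i)) ->
  order_ge (\sum_(i <- r | Q i) c i) (\prod_(i <- r | Q i) F i).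
Proof.
move=> h; elim/big_rec2: _ => [m|i k f qi hf]; first by rewrite ltn0.
exact: order_geM (h i qi) hf.
Qed.

Lemma order_ge_exp a f : order_ge 1 f -> order_ge a (f ^+ a).
Proof.
move=> hf; elim: a => [|a IH]; first by move=> m; rewrite ltn0.
by rewrite exprS -add1n; apply: order_geM.
Qed.

Lemma order_ge_prodB (I : Type) (r : seq I) (Q : pred I) (A B : I -> P) (c : I -> nat) :
    (forall i, Q i -> order_ge (c i) (B i) /\ order_ge (c i).+1 (A i - B i)) ->
  order_ge (\sum_(i <- r | Q i) c i).+1
           (\prod_(i <- r | Q i) A i - \prod_(i <- r | Q i) B i).
Proof.
move=> h; elim: r => [|y r IH]; first by rewrite !big_nil subrr.
rewrite !big_cons; case: ifP => qy //; have [hBy hABy] := h y qy.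
set a := \prod_(j <- r | Q j) A j; set b := \prod_(j <- r | Q j) B j.
have hb : order_ge (\sum_(j <- r | Q j) c j) b.
  by apply: order_ge_prod => j qj; case: (h j qj).
have -> : A y * a - B y * b = (A y - B y) * (b + (a - b)) + B y * (a - b) by ring.
apply: order_geD; last by rewrite -addnS; apply: order_geM.
rewrite -addSn; apply: order_geM => //; apply: order_geD => //.
exact: order_ge_le (leqnSn _) IH.
Qed.

Lemma order_ge_decomp k f : order_ge k.+1 f ->
  exists g : 'I_n -> P, (forall i, order_ge k (g i)) /\ f = \sum_i x i * g i.
Proof.
move=> hf.
pose g i : P := fun q : mono n =>
  if [pick j | (0 < addm q (unitm i) j)%N] == Some i then f (addm q (unitm i)) else 0.
exists g; split => [i q hq|].
  by rewrite /g hf ?if_same // mdeg_addm mdeg_unitm addn1.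
apply: funext => p; rewrite coef_sum.
transitivity (\sum_i (if [pick j | 0 < p j]%N == Some i then f p else 0)).
  case: pickP => [j hj|p0].
    rewrite (bigD1 j) //= eqxx big1 ?addr0 // => i /negbTE h.
    by case: eqP => // [[e]]; move: h; rewrite e eqxx.
  rewrite big1 => [|i _]; last by case: (None =P Some i).
  suff -> : p = zerom n by apply: hf; rewrite mdeg_zerom.
  by apply/ffunP => i; have := p0 i; rewrite ffunE /=; case: (p i).
apply: eq_bigr => i _; rewrite mXE coef_monM lem_unitm /g.
case: (posnP (p i)) => [p_i|p_i]; last by rewrite addmC addm_subm ?lem_unitm.
by case: pickP => // j hj; case: eqP => // [[e]]; move: hj; rewrite e p_i.
Qed.

End MonomialSeries.

Section SymmetricFunctions.
Variables (R : comPzRingType) (n : nat).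
Local Notation P := (mps R n).
Local Notation mon := (@mmono R n).
Local Notation x := (@mX R n).

Definition xvar (k : nat) : P := if insub k is Some i then x i else 0.

Lemma xvarE (i : 'I_n) : xvar i = x i.
Proof. by rewrite /xvar valK. Qed.

(* [h_first i k] is h_k(x_0, ..., x_(i-1)) and [e_last j k] is
   e_k(x_(n-j), ..., x_(n-1)). *)
Fixpoint h_first (i : nat) : nat -> P :=
  match i with
  | 0 => fun k => (k == 0%N)%:R
  | i'.+1 => fix h_first_i k :=
      if k is k'.+1 then h_first i' k + xvar i' * h_first_i k' else 1
  end.

Fixpoint e_last (j : nat) : nat -> P :=
  match j with
  | 0 => fun k => (k == 0%N)%:R
  | j'.+1 => fun k => if k is k'.+1 then e_last j' k + xvar (n - j) * e_last j' k' else 1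
  end.

Definition h_all := h_first n.

Lemma h_first0 i : h_first i 0 = 1. Proof. by case: i. Qed.

Lemma h_firstS i k : h_first i.+1 k.+1 = h_first i k.+1 + xvar i * h_first i.+1 k.
Proof. by []. Qed.

Lemma e_last0 j : e_last j 0 = 1. Proof. by case: j. Qed.

Lemma e_lastS j k : e_last j.+1 k.+1 = e_last j k.+1 + xvar (n - j.+1) * e_last j k.
Proof. by []. Qed.

Lemma e_last_gt j k : (j < k)%N -> e_last j k = 0.
Proof. by elim: j k => [|j IH] [|k] //= h; rewrite !IH ?mulr0 ?addr0 // ltnW. Qed.

Lemma h_first_sum i a : h_first i.+1 a = \sum_(b < a.+1) xvar i ^+ b * h_first i (a - b).
Proof.
elim: a => [|a IH]; first by rewrite big_ord1 expr0 mul1r /= h_first0.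
rewrite h_firstS IH [RHS]big_ord_recl expr0 mul1r subn0 mulr_sumr; congr (_ + _).
by apply: eq_bigr => b _; rewrite /= exprS mulrA subSS.
Qed.

(* Coefficient of t^k in prod_(l < n-j) 1/(1 - x_l t)
   = prod_l 1/(1 - x_l t) * prod_(l >= n-j) (1 - x_l t). *)
Lemma h_first_e_last j k : (j <= n)%N ->
  h_first (n - j) k = \sum_(l < k.+1) (-1) ^+ l * e_last j l * h_all (k - l).
Proof.
elim: j k => [|j IH] k hj.
  rewrite subn0 big_ord_recl big1 => [|l _]; last by rewrite /= mulr0 mul0r.
  by rewrite /= expr0 !mul1r subn0 addr0.
set i := (n - j.+1)%N; have ei : (n - j = i.+1)%N by rewrite /i; lia.
elim: k => [|k IHk]; first by rewrite big_ord1 h_first0 e_last0 expr0 !mul1r /h_all h_first0.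
have -> : h_first i k.+1 = h_first i.+1 k.+1 - xvar i * h_first i.+1 k.
  by rewrite h_firstS addrK.
rewrite -ei !IH ?(ltnW hj) // [in RHS]big_ord_recl [in LHS]big_ord_recl /=.
rewrite !expr0 !mul1r !e_last0 !subn0 -addrA mul1r; congr (_ + _).
rewrite mulr_sumr -sumrN -big_split /=; apply: eq_bigr => l _.
rewrite /bump /= add1n add0n subSS -/i exprS; ring.
Qed.

Definition supp_lt i (u : mono n) := [forall j : 'I_n, (i <= j)%N ==> (u j == 0%N)].

Lemma supp_lt0 u : supp_lt 0 u = (u == zerom n).
Proof.
apply/forallP/eqP => [h|-> j]; last by rewrite ffunE eqxx implybT.
by apply/ffunP => j; rewrite ffunE; apply/eqP; move: (h j).
Qed.

Lemma supp_lt_zerom i : supp_lt i (zerom n).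
Proof. by apply/forallP => j; rewrite ffunE eqxx implybT. Qed.

Lemma supp_lt_n u : supp_lt n u.
Proof. by apply/forallP => j; rewrite leqNgt ltn_ord. Qed.

Lemma supp_ltW i u : supp_lt i u -> supp_lt i.+1 u.
Proof.
by move/forallP=> h; apply/forallP => j; apply/implyP => hj; move: (h j); rewrite ltnW.
Qed.

Lemma supp_ltS (o : 'I_n) u : supp_lt o u = supp_lt o.+1 u && (u o == 0%N).
Proof.
apply/forallP/andP => [h|[/forallP h1 h2] j].
  split; last by move: (h o); rewrite leqnn.
  by apply/forallP => j; apply/implyP => hj; move: (h j); rewrite ltnW.
apply/implyP => hj; case: (ltngtP o j) => hoj; first by move: (h1 j); rewrite hoj.
  by move: hj; rewrite leqNgt hoj.
by rewrite -(val_inj hoj).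
Qed.

Lemma supp_lt_subm_unit i (o : 'I_n) u : (o < i)%N ->
  supp_lt i (subm u (unitm o)) = supp_lt i u.
Proof.
move=> hoi; apply: eq_forallb => j; rewrite !ffunE.
by case: (j =P o) => [->|_]; rewrite ?subn0 // leqNgt hoi.
Qed.

Lemma supp_lt_addm i u v : supp_lt i u -> supp_lt i v -> supp_lt i (addm u v).
Proof.
move=> /forallP hu /forallP hv; apply/forallP => j; apply/implyP => hj; rewrite ffunE.
by move/implyP/(_ hj)/eqP: (hu j) => ->; move/implyP/(_ hj): (hv j).
Qed.

Lemma coef_h_first i k m : (i <= n)%N ->
  h_first i k m = ((mdeg m == k) && supp_lt i m)%:R.
Proof.
elim: i k m => [|i IH] k m hi.
  rewrite supp_lt0 /=; case: k => [|k]; first by rewrite mulr1n coef1 mdeg_eq0 andbb.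
  rewrite mulr0n coef0; case: (m =P zerom n) => [->|_]; last by rewrite andbF.
  by rewrite mdeg_zerom.
pose o : 'I_n := Ordinal hi.
elim: k m => [|k IHk] m.
  by rewrite h_first0 coef1 mdeg_eq0; case: eqP => // ->; rewrite supp_lt_zerom.
rewrite h_firstS coefD -[i]/(nat_of_ord o) xvarE mXE coef_monM lem_unitm.
rewrite IH ?(ltnW hi) // (supp_ltS o m).
case: (posnP (m o)) => hmo; first by rewrite andbT addr0.
rewrite !andbF add0r IHk supp_lt_subm_unit // mdeg_subm ?lem_unitm // mdeg_unitm.
have := leq_mdeg m o => hle.
by have -> : (mdeg m - 1 == k)%N = (mdeg m == k.+1) by apply/eqP/eqP; lia.
Qed.

Lemma h_all_homog_sym d : (0 < d)%N -> homog_sym_pos (h_all d).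
Proof.
move=> hd; split => [|s m]; last by rewrite /h_all !coef_h_first // mdeg_perm !supp_lt_n.
exists d => // m; rewrite /h_all coef_h_first //.
by case: (mdeg m =P d); rewrite ?eqxx.
Qed.

End SymmetricFunctions.

Section HighDegreeMonomials.
Variables (R : comPzRingType) (n : nat).
Local Notation P := (mps R n).
Local Notation in_S := (@in_S R n).
Local Notation congr_S := (@congr_S R n).
Local Notation mon := (@mmono R n).
Local Notation x := (@mX R n).
Local Notation h_first := (@h_first R n).
Local Notation e_last := (@e_last R n).
Local Notation xvar := (@xvar R n).

Lemma h_first_congr_S i k : (i <= n)%N ->
  congr_S (h_first i k) ((-1) ^+ k * e_last (n - i) k).
Proof.
move=> hi; rewrite congr_SE -{1}(subKn hi) h_first_e_last ?leq_subr //.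
rewrite big_ord_recr /= subnn /h_all h_first0 mulr1 addrK.
apply: in_S_sum => l _; apply: in_SMl; apply/in_S_homog_sym/h_all_homog_sym.
by rewrite subn_gt0.
Qed.

Lemma h_first_in_S i k : (i <= n)%N -> (n - i < k)%N -> in_S (h_first i k).
Proof.
move=> hi hk; have := h_first_congr_S k hi.
by rewrite e_last_gt // mulr0 congr_SE subr0.
Qed.

Inductive mspan (A : mono n -> Prop) : P -> Prop :=
| mspan0 : mspan A 0
| mspan_mon u : A u -> mspan A (mon u)
| mspanD f g : mspan A f -> mspan A g -> mspan A (f + g).

Lemma in_S_mspan (A : mono n -> Prop) (g f : P) :
  mspan A f -> (forall u, A u -> in_S (g * mon u)) -> in_S (g * f).
Proof.
move=> + h; elim=> [|u /h //|f1 f2 _ h1 _ h2]; first by rewrite mulr0; apply: in_S0.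
by rewrite mulrDr; apply: in_SD.
Qed.

Lemma mspan_monM (A B : mono n -> Prop) v f : (forall u, A u -> B (addm v u)) ->
  mspan A f -> mspan B (mon v * f).
Proof.
move=> h; elim=> [|u pu|f1 f2 _ h1 _ h2]; first by rewrite mulr0; apply: mspan0.
  by rewrite monM; apply/mspan_mon/h.
by rewrite mulrDr; apply: mspanD.
Qed.

Lemma mspan_h_first i d : (i <= n)%N ->
  mspan (fun u => supp_lt i u /\ mdeg u = d) (h_first i d).
Proof.
have mspan_one j : mspan (fun u => supp_lt j u /\ mdeg u = 0%N) 1.
  by rewrite -mon0; apply: mspan_mon; rewrite supp_lt_zerom mdeg_zerom.
elim: i d => [|i IH] d hi.
  by case: d => [|d]; [rewrite h_first0 | rewrite /= mulr0n; apply: mspan0].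
pose o : 'I_n := Ordinal hi.
elim: d => [|d IHd]; first exact: mspan_one.
rewrite h_firstS; apply: mspanD.
  have : mspan (fun u => supp_lt i u /\ mdeg u = d.+1) (h_first i d.+1) by apply: IH; lia.
  by elim=> [|u [su du]|f g _ hf _ hg]; constructor => //; split => //; apply: supp_ltW.
rewrite -[i]/(nat_of_ord o) xvarE mXE; apply: mspan_monM IHd => u [su du]; split.
  apply: supp_lt_addm su; apply/forallP => j; apply/implyP => hj.
  by rewrite ffunE; case: (j =P o) => // e; move: hj; rewrite e ltnn.
by rewrite mdeg_addm mdeg_unitm du.
Qed.

Definition stair_deg i := (\sum_(j < i) (n - j.+1))%N.

(* Strong induction on [a]: when [nu] alone is not of high degree, [a > n-i-1] and
   x_i^a = h_(a)(x_0..x_i) - sum_(b < a) x_i^b h_(a-b)(x_0..x_(i-1)), where the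
   first term lies in S and every other term trades powers of x_i for degree
   in x_0..x_(i-1). *)
Lemma in_S_mX_exp_mon i (hi : (i < n)%N) :
    (forall mu, supp_lt i mu -> (stair_deg i < mdeg mu)%N -> in_S (mon mu)) ->
  forall a nu, supp_lt i nu -> (stair_deg i.+1 < mdeg nu + a)%N ->
  in_S (x (Ordinal hi) ^+ a * mon nu).
Proof.
move=> high; set o := Ordinal hi; elim/ltn_ind => a IHa nu hnu hlt.
have [hD|hD] := ltnP (stair_deg i) (mdeg nu); first by apply: in_SMl; apply: high.
have ha : (n - i.+1 < a)%N by move: hlt hD; rewrite /stair_deg big_ord_recr /=; lia.
have -> : x o ^+ a = h_first i.+1 a - \sum_(b < a) x o ^+ b * h_first i (a - b).
  have xo : xvar i = x o by rewrite -xvarE.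
  by rewrite h_first_sum big_ord_recr /= subnn h_first0 mulr1 xo; ring.
rewrite mulrBl mulr_suml; apply: in_SB; first by apply/in_SMr/h_first_in_S.
apply: in_S_sum => b _; rewrite -mulrA [h_first _ _ * _]mulrC mulrA.
apply: (in_S_mspan (mspan_h_first (a - b) (ltnW hi))) => u [hu du].
rewrite -mulrA monM; apply: IHa; [exact: ltn_ord | exact: supp_lt_addm |].
by rewrite mdeg_addm du; have := ltn_ord b; lia.
Qed.

Lemma in_S_mon i mu : (i <= n)%N -> supp_lt i mu -> (stair_deg i < mdeg mu)%N ->
  in_S (mon mu).
Proof.
elim: i mu => [mu _|i IH mu hi hs hd].
  by rewrite supp_lt0 => /eqP ->; rewrite mdeg_zerom /stair_deg big_ord0.
pose o : 'I_n := Ordinal hi; pose nu : mono n := [ffun j => if j == o then 0%N else mu j].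
have emu : mu = addm (powm o (mu o)) nu.
  by apply/ffunP => j; rewrite !ffunE; case: (j =P o) => [->|]; rewrite ?addn0.
rewrite emu -monM -mX_exp; apply: in_S_mX_exp_mon => [nu' hnu' hd'||].
- by apply: IH => //; apply: ltnW.
- apply/forallP => j; apply/implyP => hj; rewrite ffunE.
  case: (j =P o) => // /eqP ne; move/forallP/(_ j)/implyP: hs; apply.
  by rewrite ltn_neqAle hj andbT; apply: contra ne => /eqP e; apply/eqP/val_inj.
- by move: hd; rewrite {1}emu mdeg_addm mdeg_powm addnC.
Qed.

End HighDegreeMonomials.

Lemma vieta_step (T : comPzRingType) (j : nat) (t y : T) (e e' : nat -> T) :
    e' 0%N = 1 -> (forall k, e' k.+1 = e k.+1 + y * e k) -> e 0%N = 1 -> e j.+1 = 0 ->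
  (t - y) * \sum_(k < j.+1) (-1) ^+ k * e k * t ^+ (j - k)
  = \sum_(k < j.+2) (-1) ^+ k * e' k * t ^+ (j.+1 - k).
Proof.
move=> e'0 e'S e0 ej.
rewrite [RHS]big_ord_recl /= e'0 expr0 !mul1r subn0.
have bump0 k : bump 0 k = k.+1 by [].
symmetry; under eq_bigr => k _ do rewrite bump0 e'S subSS exprS mulrDr mulrDl.
symmetry; rewrite big_split /= addrA mulrBl; congr (_ + _); last first.
  by rewrite mulr_sumr -sumrN; apply: eq_bigr => k _; ring.
rewrite mulr_sumr big_ord_recl /= e0 expr0 !mul1r subn0 -exprS; congr (_ + _).
rewrite [RHS]big_ord_recr /= ej mulr0 mul0r addr0.
apply: eq_bigr => k _; rewrite bump0.
have hk : (j - k.+1).+1 = (j - k)%N by have := ltn_ord k; lia.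
by rewrite -hk !exprS; ring.
Qed.

Section Vandermonde.
Variables (R : comPzRingType) (n : nat).
Local Notation P := (mps R n).
Local Notation in_S := (@in_S R n).
Local Notation congr_S := (@congr_S R n).
Local Notation mon := (@mmono R n).
Local Notation x := (@mX R n).
Local Notation h_first := (@h_first R n).
Local Notation e_last := (@e_last R n).
Local Notation xvar := (@xvar R n).
Local Notation stair_deg := (@stair_deg n).

Lemma vieta_e_last j (t : P) : (j <= n)%N ->
  \prod_(b < n | (n - j <= b)%N) (t - x b)
  = \sum_(k < j.+1) (-1) ^+ k * e_last j k * t ^+ (j - k).
Proof.
elim: j => [_|j IH hj].
  rewrite big_pred0 => [|b]; last by rewrite subn0 leqNgt ltn_ord.
  by rewrite big_ord1 expr0 e_last0 !mul1r.
have hb : (n - j.+1 < n)%N by lia.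
pose b0 : 'I_n := Ordinal hb.
rewrite (bigD1 b0) /=; last exact: leqnn.
rewrite (eq_bigl (fun b : 'I_n => n - j <= b)%N); last first.
  move=> b /=; rewrite -val_eqE /=; apply/andP/idP => [[h1 /eqP h2]|h]; first by lia.
  by split; [lia | apply/eqP; lia].
rewrite IH ?(ltnW hj) //; apply: (@vieta_step _ j _ _ (e_last j) (e_last j.+1)).
- exact: e_last0.
- by move=> k; rewrite e_lastS -xvarE.
- exact: e_last0.
- exact: e_last_gt.
Qed.

Definition stair i : mono n := [ffun j : 'I_n => if (j < i)%N then (n - j.+1)%N else 0%N].

Lemma supp_lt_stair i : supp_lt i (stair i).
Proof. by apply/forallP => j; apply/implyP => hj; rewrite ffunE ltnNge hj. Qed.

Lemma mdeg_stair i : (i <= n)%N -> mdeg (stair i) = stair_deg i.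
Proof.
move=> hi; rewrite /stair_deg (big_ord_widen _ (fun j => n - j.+1)%N hi) big_mkcond /=.
by apply: eq_bigr => j _; rewrite ffunE.
Qed.

Lemma stair0 : stair 0 = zerom n.
Proof. by apply/ffunP => j; rewrite !ffunE. Qed.

Lemma stairS (o : 'I_n) : stair o.+1 = addm (stair o) (powm o (n - o.+1)).
Proof.
apply/ffunP => j; rewrite !ffunE; case: (j =P o) => [->|/eqP ne]; first by rewrite ltnn ltnSn.
by rewrite addn0 ltnS leq_eqVlt val_eqE (negbTE ne).
Qed.

Lemma stairn : stair n = [ffun j : 'I_n => (n.-1 - j)%N].
Proof. by apply/ffunP => j; rewrite !ffunE ltn_ord; lia. Qed.

(* Modulo S, multiplying the staircase on x_0..x_(i-1) by h_k(x_0..x_i) only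
   sees the monomial x_i^k: the other terms are monomials in x_0..x_(i-1) of
   degree above [stair_deg i]. *)
Lemma stair_h_first_congr_S (o : 'I_n) k :
  congr_S (mon (stair o) * h_first o.+1 k) (mon (stair o) * x o ^+ k).
Proof.
rewrite congr_SE h_first_sum big_ord_recr /= subnn h_first0 mulr1 xvarE.
rewrite mulrDr addrK mulr_sumr; apply: in_S_sum => b _; rewrite mulrA.
apply: (in_S_mspan (@mspan_h_first _ _ o _ (ltnW (ltn_ord o)))) => u [hu du].
rewrite mulrC mulrA monM mulrC; apply: in_SMl; apply: (in_S_mon _ (ltnW (ltn_ord o))).
  exact: supp_lt_addm hu (supp_lt_stair o).
rewrite mdeg_addm mdeg_stair ?(ltnW (ltn_ord o)) // du addnC -{1}(addn0 (stair_deg o)).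
by rewrite ltn_add2l subn_gt0.
Qed.

Lemma stair_mul_row (o : 'I_n) :
  congr_S (mon (stair o) * \prod_(b < n | (o < b)%N) (x o - x b))
          ((n - o)%:R * mon (stair o.+1)).
Proof.
set j := (n - o.+1)%N.
have -> : \prod_(b < n | (o < b)%N) (x o - x b) = \prod_(b < n | (n - j <= b)%N) (x o - x b).
  by apply: eq_bigl => b; rewrite /j; apply/idP/idP; have := ltn_ord o; lia.
rewrite vieta_e_last ?leq_subr // mulr_sumr.
apply: (@congr_S_trans _ _ _ (\sum_(k < j.+1) mon (stair o) * (x o ^+ k * x o ^+ (j - k)))).
  apply: congr_S_sum => k _.
  apply: (@congr_S_trans _ _ _ (mon (stair o) * (h_first o.+1 k * x o ^+ (j - k)))).
    apply: congr_SM; first exact: congr_S_refl.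
    apply: congr_SM; last exact: congr_S_refl.
    exact/congr_S_sym/h_first_congr_S.
  rewrite !mulrA; apply: congr_SM; last exact: congr_S_refl.
  exact: stair_h_first_congr_S.
rewrite (eq_bigr (fun _ => mon (stair o) * x o ^+ j)); last first.
  by move=> k _; rewrite -exprD subnKC // -ltnS ltn_ord.
rewrite sumr_const card_ord stairS -monM -mX_exp mulr_natl -/j.
have -> : j.+1 = (n - o)%N by rewrite /j; have := ltn_ord o; lia.
exact: congr_S_refl.
Qed.

Definition vdm_rows i : P :=
  \prod_(a < n | (i <= a)%N) \prod_(b < n | (a < b)%N) (x a - x b).

Lemma vdm_rowsS (o : 'I_n) :
  vdm_rows o = \prod_(b < n | (o < b)%N) (x o - x b) * vdm_rows o.+1.
Proof.
rewrite /vdm_rows (bigD1 o) //=; congr (_ * _); apply: eq_bigl => a.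
by rewrite -val_eqE /= ltn_neqAle eq_sym andbC.
Qed.

Lemma Delta_congr_stair i : (i <= n)%N ->
  congr_S (@Delta R n) ((n ^_ i)%:R * (mon (stair i) * vdm_rows i)).
Proof.
elim: i => [_|i IH hi].
  by rewrite ffactn0 stair0 mon0 !mul1r; apply: congr_S_refl.
apply: congr_S_trans (IH (ltnW hi)) _.
have -> : i = Ordinal hi by [].
rewrite vdm_rowsS mulrA ffactnSr natrM -!mulrA; apply: congr_SM; first exact: congr_S_refl.
by rewrite !mulrA; apply: congr_SM; [apply: stair_mul_row | apply: congr_S_refl].
Qed.

Lemma Delta_congr_staircase : congr_S (@Delta R n) (@staircase R n).
Proof.
have := Delta_congr_stair (leqnn n).
have -> : vdm_rows n = 1 by rewrite /vdm_rows big_pred0 // => a; rewrite leqNgt ltn_ord.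
rewrite mulr1 ffactnn stairn.
suff -> : ((n`!)%:R * mon [ffun j : 'I_n => (n.-1 - j)%N] : P) = @staircase R n by [].
by apply: funext => m; rewrite coef_natM.
Qed.

End Vandermonde.

Section Substitution.
Variables (R : comPzRingType) (k n : nat).
Local Notation P := (mps R n).
Implicit Types (F : mps R k) (u : 'I_k -> P) (m : mono n).

Lemma msubstE F u m : msubst F u m =
  \sum_(a : box k (mdeg m)) F (box_mono a) * (\prod_(i < k) u i ^+ box_mono a i) m.
Proof.
apply: eq_bigr => a _; congr (F _ * _ m); apply: eq_bigr => i _.
by rewrite box_monoE; elim: (nat_of_ord (a i)) => //= e ->; rewrite exprS.
Qed.

Lemma coef_prod_exp_gt u (v : mono k) m : (forall i, order_ge 1 (u i)) ->
  (mdeg m < mdeg v)%N -> (\prod_(i < k) u i ^+ v i) m = 0.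
Proof. by move=> hu; apply: order_ge_prod => i _; apply: order_ge_exp. Qed.

Lemma msubst_coef_deg0 F u m : mdeg m = 0%N -> msubst F u m = F (zerom k).
Proof.
move=> hm; rewrite msubstE (big_pred1 (mono_box (mdeg m) (zerom k))) => [|a]; last first.
  apply/esym/eqP/box_mono_inj; rewrite mono_boxK; last by apply/forallP => i; rewrite ffunE.
  apply/ffunP => i; have /forallP/(_ i) := boundm_box a.
  by move: (box_mono a i) => e; rewrite hm ffunE leqn0 => /eqP.
rewrite mono_boxK; last by apply/forallP => i; rewrite ffunE.
rewrite big1 => [|i _]; last by rewrite ffunE.
by rewrite coef1 hm mulr1.
Qed.

Lemma msubst_coef_deg1 F u m : (forall i, order_ge 1 (u i)) -> mdeg m = 1%N ->
  msubst F u m = \sum_(l < k) F (unitm l) * u l m.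
Proof.
move=> hu hm; rewrite msubstE.
transitivity (\sum_(a : box k (mdeg m)) \sum_(l < k)
                 (if box_mono a == unitm l then F (unitm l) * u l m else 0)).
  apply: eq_bigr => a _; move: (box_mono a) => v.
  have [v0|v_gt1|/mdeg_eq1 [l0 ->]] := ltngtP (mdeg v) 1.
  - have -> : v = zerom k by apply/eqP; rewrite -mdeg_eq0; move: v0; rewrite ltnS leqn0.
    rewrite big1 => [|i _]; last by rewrite ffunE.
    rewrite coef1 hm mulr0 big1 // => l _; case: eqP => // e.
    by move: (mdeg_unitm l); rewrite -e mdeg_zerom.
  - rewrite coef_prod_exp_gt ?hm // mulr0 big1 // => l _; case: eqP => // e.
    by move: v_gt1; rewrite e mdeg_unitm.
  - rewrite (bigD1 l0) //= big1 => [|i ne]; last by rewrite ffunE (negbTE ne).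
    rewrite ffunE eqxx expr1 mulr1 (bigD1 l0) //= eqxx big1 ?addr0 // => l ne.
    by case: eqP => // /unitm_inj e; move: ne; rewrite e eqxx.
rewrite exchange_big; apply: eq_bigr => l _; rewrite -big_mkcond /= sum_box_mono_eq.
suff -> : boundm (mdeg m) (unitm l) by [].
by apply/forallP => i; rewrite hm ffunE; case: eqP.
Qed.

End Substitution.

Lemma sum1_ord_gt N a : (\sum_(b < N | a < b) 1 = N - a.+1)%N.
Proof.
rewrite big_mkcond /=; elim: N => [|N IH]; first by rewrite big_ord0.
by rewrite big_ord_recr /= IH; case: (ltnP a N) => h; lia.
Qed.

Section FormalGroupLaw.
Variables (R : comPzRingType) (F : mps R 2) (chi : mps R 1).

Lemma msubst_pair2_coef_deg1 k (u v : mps R k) m :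
    order_ge 1 u -> order_ge 1 v -> mdeg m = 1%N ->
  msubst F (pair2 u v) m = F (unitm ord0) * u m + F (unitm ord_max) * v m.
Proof.
move=> hu hv hm; rewrite msubst_coef_deg1 // => [|i]; last by rewrite /pair2; case: ifP.
by rewrite big_ord_recr big_ord1.
Qed.

Lemma fgl_coef_linear : is_fgl F -> formal_inverse F chi ->
  [/\ F (zerom 2) = 0, F (unitm ord0) = 1, F (unitm ord_max) = 1 & chi (unitm ord0) = -1].
Proof.
case=> hx hy _ _ [chi0 hinv].
have X1 := @order_ge_mX R 1 ord0; have O1 := @order_ge0 R 1 1.
have chi1 : order_ge 1 (chi : mps R 1).
  by move=> m; rewrite ltnS leqn0 mdeg_eq0 => /eqP ->.
have F0 : F (zerom 2) = 0.
  have := congr1 (fun f => f (zerom 1)) hx; rewrite /= msubst_coef_deg0 ?mdeg_zerom //.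
  by rewrite coef_mX eq_sym unitm_eq0.
have Fx : F (unitm ord0) = 1.
  have := congr1 (fun f => f (unitm ord0)) hx.
  by rewrite /= msubst_pair2_coef_deg1 ?mdeg_unitm // coef_mX eqxx mulr1 /mzero mulr0 addr0.
have Fy : F (unitm ord_max) = 1.
  have := congr1 (fun f => f (unitm ord0)) hy.
  by rewrite /= msubst_pair2_coef_deg1 ?mdeg_unitm // coef_mX eqxx mulr1 /mzero mulr0 add0r.
split => //; have := congr1 (fun f => f (unitm ord0)) hinv.
rewrite /= msubst_pair2_coef_deg1 ?mdeg_unitm // coef_mX eqxx mulr1n Fx Fy !mul1r /mzero.
by move/eqP; rewrite addrC addr_eq0 => /eqP.
Qed.

Lemma fsub_mX_linear n (i j : 'I_n) : is_fgl F -> formal_inverse F chi ->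
  order_ge 2 (fsub F chi (mX R i) (mX R j) - (mX R i - mX R j)).
Proof.
move=> hF hchi; have [F0 Fx Fy chi_x] := fgl_coef_linear hF hchi.
have [chi0 _] := hchi; set c := msubst chi (fun=> mX R j).
have c_ord : order_ge 1 c.
  by move=> m; rewrite ltnS leqn0 => /eqP hm; rewrite /c msubst_coef_deg0.
have c_lin m : mdeg m = 1%N -> c m = - (m == unitm j)%:R.
  move=> hm; rewrite /c msubst_coef_deg1 // => [|_]; last exact: order_ge_mX.
  by rewrite big_ord1 chi_x coef_mX mulN1r.
move=> m hm; rewrite coefB /fsub -/c; case: (posnP (mdeg m)) => hm0.
  have /eqP -> : m == zerom n by rewrite -mdeg_eq0 hm0.
  rewrite msubst_coef_deg0 ?mdeg_zerom // F0 !coefB.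
  by rewrite !coef_mX ![zerom n == _]eq_sym !unitm_eq0 !subr0.
have hm1 : mdeg m = 1%N by move: hm hm0; lia.
rewrite msubst_pair2_coef_deg1 //; last exact: order_ge_mX.
by rewrite Fx Fy !mul1r c_lin // !coefB !coef_mX subrr.
Qed.

End FormalGroupLaw.

Section DeltaF.
Variables (R : comPzRingType) (n : nat).
Local Notation P := (mps R n).
Local Notation in_S := (@in_S R n).
Local Notation mon := (@mmono R n).
Local Notation x := (@mX R n).

Lemma in_S_mon_order_ge k mu (f : P) : (stair_deg n n < mdeg mu + k)%N ->
  order_ge k f -> in_S (mon mu * f).
Proof.
elim: k mu f => [|k IH] mu f hmu hf.
  by apply/in_SMr/(in_S_mon _ (leqnn n)); rewrite ?supp_lt_n // -(addn0 (mdeg mu)).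
have [g [hg ->]] := order_ge_decomp hf.
rewrite mulr_sumr; apply: in_S_sum => i _; rewrite mulrA mXE monM; apply: IH => //.
by rewrite mdeg_addm mdeg_unitm -addnA.
Qed.

Lemma in_S_order_ge (f : P) : order_ge (stair_deg n n).+1 f -> in_S f.
Proof. by move=> hf; rewrite -[f]mul1r -mon0; apply: in_S_mon_order_ge hf; rewrite mdeg_zerom. Qed.

Lemma Delta_congr_DeltaF (F : mps R 2) (chi : mps R 1) : is_fgl F -> formal_inverse F chi ->
  congr_S (@Delta R n) (@DeltaF R n F chi).
Proof.
move=> hF hchi; rewrite congr_SE -opprB; apply/in_SN/in_S_order_ge.
have -> : stair_deg n n = (\sum_(a < n) \sum_(b < n | a < b) 1)%N.
  by apply: eq_bigr => a _; rewrite sum1_ord_gt.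
have x_diff (a b : 'I_n) : order_ge 1 (x a - x b) by apply: order_geB; apply: order_ge_mX.
apply: order_ge_prodB => a _; split; first by apply: order_ge_prod => b _; apply: x_diff.
by apply: order_ge_prodB => b _; split; [apply: x_diff | apply: fsub_mX_linear].
Qed.

End DeltaF.

Theorem mainTheorem9 (R : comPzRingType) (n : nat) (F : mps R 2) (chi : mps R 1) :
  is_fgl F -> formal_inverse F chi ->
  congr_S (@Delta R n) (@staircase R n) /\ congr_S (@Delta R n) (@DeltaF R n F chi).
Proof.
move=> hF hchi; split; first exact: Delta_congr_staircase.
exact: Delta_congr_DeltaF.
Qed.
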